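(* Let $T$ be the regular rooted tree of valence $p\geq 2$ with the embedded wire diffeology $\mathcal{D}_T$, and equip $\operatorname{Aut}T$ with the functional diffeology. Then the D-topology of $\operatorname{Aut}T$ with respect to this diffeology is the discrete topology.
   Context: Fix a finite alphabet $A$ with $|A|=p\geq 2$. The vertices of $T$ are the finite words over $A$ (the root is the empty word); two vertices are joined by an edge iff they have the form $a_1\dots a_n$ and $a_1\dots a_na_{n+1}$. As a topological space, $T$ is the 1-dimensional CW complex obtained by realizing each edge as a copy of $[0,1]$, with its usual topology. $\operatorname{Aut}T$ is the group of bijections of the vertex set fixing the root and preserving adjacency; each is regarded as a homeomorphism of the geometric realization mapping each edge affinely onto its image edge. A diffeology on a set $X$ is a collection of maps $U\to X$ (''plots''), $U$ ranging over open subsets of all $\mathbb{R}^n$, containing all constant maps, closed under precomposition with smooth maps, and satisfying the sheaf condition. The embedded wire diffeology $\mathcal{D}_T$ is the diffeology on $T$ generated by (i.e. the smallest diffeology containing) all maps $\gamma:\mathbb{R}\to T$ that are injective, continuous, and homeomorphisms onto their images. A map between diffeological spaces is smooth if it sends plots to plots. The functional diffeology on $C^\infty(T,T)$ is the coarsest diffeology such that the evaluation map $C^\infty(T,T)\times T\to T$ is smooth (with the product diffeology, the coarsest making projections smooth); $\operatorname{Aut}T\subseteq C^\infty(T,T)$ carries the subset diffeology. The D-topology of a diffeological space $X$ is the topology in which $S\subseteq X$ is open iff $P^{-1}(S)$ is open for every plot $P$ of $X$. *)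

From HB Require Import structures.
From mathcomp Require Import all_boot all_order all_algebra.
From mathcomp Require Import all_classical all_reals all_analysis.
Set Implicit Arguments. Unset Strict Implicit. Unset Printing Implicit Defensive.
Import Order.TTheory GRing.Theory Num.Theory.
Import numFieldNormedType.Exports.
Local Open Scope classical_set_scope.
Local Open Scope ring_scope.

Section Diffeology.
Variable R : realType.

Fixpoint Ck (m k : nat) (j : nat) (U : set 'rV[R]_m) (f : 'rV[R]_m -> 'rV[R]_k)
  : Prop :=
  match j with
  | 0%N => forall x, U x -> {for x, continuous f}
  | j'.+1 => forall i : 'I_m,
      (forall x, U x -> derivable f x (delta_mx ord0 i)) /\
      Ck j' U (fun x => 'D_(delta_mx ord0 i) f x)
  end.

Definition smooth_on (m k : nat) (U : set 'rV[R]_m) (f : 'rV[R]_m -> 'rV[R]_k)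
  := forall j, Ck j U f.

(* A "parametrization family" on X: for each n, a predicate on pairs (U, P),
   P : U -> X represented by a total map whose values off U are irrelevant. *)
Definition pfam (X : Type) := forall n : nat, set 'rV[R]_n -> ('rV[R]_n -> X) -> Prop.

Definition is_diffeology (X : Type) (D : pfam X) : Prop :=
  [/\ (forall n U P, D n U P -> open U),
      (forall n (U : set 'rV[R]_n) (x : X), open U -> D n U (fun _ => x)),
      (forall n m (U : set 'rV[R]_n) (V : set 'rV[R]_m) P
              (f : 'rV[R]_m -> 'rV[R]_n) Q,
          D n U P -> open V -> smooth_on V f -> (forall y, V y -> U (f y)) ->
          (forall y, V y -> Q y = P (f y)) -> D m V Q) &
      (forall n (U : set 'rV[R]_n) P, open U ->
          (forall x, U x -> exists V, [/\ open V, V x, V `<=` U & D n V P]) ->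
          D n U P)].

Definition gen_diffeology (X : Type) (G : (R -> X) -> Prop) : pfam X :=
  fun n U P => forall D : pfam X, is_diffeology D ->
    (forall g, G g -> D 1%N setT (fun v => g (v ord0 ord0))) -> D n U P.

Definition dsmooth (X Y : Type) (DX : pfam X) (DY : pfam Y) (f : X -> Y) :=
  forall n U P, DX n U P -> DY n U (fun u => f (P u)).

Definition prod_diffeology (X Y : Type) (DX : pfam X) (DY : pfam Y)
  : pfam (X * Y) :=
  fun n U P => [/\ open U, DX n U (fun u => (P u).1) & DY n U (fun u => (P u).2)].

Definition sub_diffeology (X : Type) (Q : X -> Prop) (D : pfam X)
  : pfam {x : X | Q x} :=
  fun n U P => D n U (fun u => proj1_sig (P u)).

Definition D_open (X : Type) (D : pfam X) (S : set X) : Prop :=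
  forall n U P, D n U P -> open [set u | U u /\ S (P u)].

Variable A : finType.

Lemma unit_in : (0 : R) < 1 <= (1 : R).
Proof. by rewrite ltr01 lexx. Qed.

(* A point of the realization is the root (None) or a point (w, a, t) on the
   edge from w to w++[a], at parameter t in (0,1] (t = 1 is the vertex w++[a]). *)
Definition Tpt := option (seq A * A * {t : R | 0 < t <= 1}).

Definition vtx (w : seq A) : Tpt :=
  match w with
  | [::] => None
  | x :: s => Some (belast x s, last x s, exist _ 1 unit_in)
  end.

Definition epoint (w : seq A) (a : A) (t : R) : Tpt :=
  match @idP (0 < t <= 1) with
  | ReflectT h => Some (w, a, exist _ t h)
  | ReflectF _ => vtx w
  end.

(* CW (weak) topology: S is open iff its trace on each closed edge is open *)
Definition T_open (S : set Tpt) : Prop :=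
  forall w a, exists O : set R, open O /\
    (forall t, 0 <= t <= 1 -> (O t <-> S (epoint w a t))).

Definition T_continuous (g : R -> Tpt) : Prop :=
  forall S, T_open S -> open (g @^-1` S).

Definition T_embedding_onto_image (g : R -> Tpt) : Prop :=
  forall O : set R, open O -> exists S, T_open S /\ (forall x, O x <-> S (g x)).

Definition wire (g : R -> Tpt) : Prop :=
  injective g /\ T_continuous g /\ T_embedding_onto_image g.

Definition D_T : pfam Tpt := gen_diffeology wire.

Definition Cinf := {f : Tpt -> Tpt | dsmooth D_T D_T f}.

Definition ev (p : Cinf * Tpt) : Tpt := proj1_sig p.1 p.2.

(* coarsest diffeology making evaluation smooth: a parametrization is a plot
   iff it is a plot of some diffeology for which ev is smooth *)
Definition D_fun : pfam Cinf :=
  fun n U P => exists D : pfam Cinf,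
    [/\ is_diffeology D, D n U P & dsmooth (prod_diffeology D D_T) D_T ev].

Definition adj (v w : seq A) : Prop :=
  (exists a, w = rcons v a) \/ (exists a, v = rcons w a).

Definition is_tree_aut (g : seq A -> seq A) : Prop :=
  [/\ bijective g, g [::] = [::] & forall v w, adj v w <-> adj (g v) (g w)].

(* the homeomorphism of the realization induced by g: edges mapped affinely *)
Definition realize (g : seq A -> seq A) (x : Tpt) : Tpt :=
  match x with
  | None => None
  | Some (w, a, t) =>
      match rev (g (rcons w a)) with
      | b :: r => Some (rev r, b, t)
      | [::] => None
      end
  end.

Definition is_aut_map (f : Cinf) : Prop :=
  exists g, is_tree_aut g /\ forall x, proj1_sig f x = realize g x.

Definition AutT := {f : Cinf | is_aut_map f}.

Definition D_aut : pfam AutT := @sub_diffeology Cinf is_aut_map D_fun.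

End Diffeology.

From HB Require Import structures.
From mathcomp Require Import all_boot all_order all_algebra.
From mathcomp Require Import all_classical all_reals all_analysis.
From mathcomp Require Import lra.
Set Implicit Arguments. Unset Strict Implicit. Unset Printing Implicit Defensive.
Import Order.TTheory GRing.Theory Num.Theory.
Import numFieldNormedType.Exports.
Local Open Scope classical_set_scope.
Local Open Scope ring_scope.

(* Every plot of the wire diffeology is continuous for the CW topology of T,
   since continuous parametrizations form a diffeology containing the wires.
   For a vertex v0, the barycentric coordinate [tent v0] is continuous on T and
   takes only the values 0 and 1 at vertices.  If P is a plot of Aut T and v a
   vertex, then u |-> P u (v) is a plot of T, hence continuous, with vertex
   values; composing with [tent (P u0 v)] gives a continuous {0,1}-valued
   function on each segment [u0, u] in the domain, which is therefore constant.
   So every plot of Aut T is locally constant and every subset is D-open. *)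

Lemma open_disjoint_separated (T : topologicalType) (B0 B1 : set T) :
  open B0 -> open B1 -> B0 `&` B1 = set0 -> separated B0 B1.
Proof.
move=> oB0 oB1 dB; split; apply/seteqP; split=> // x.
- move=> [cx B1x]; have [y [B0y B1y]] := cx B1 (open_nbhs_nbhs (conj oB1 B1x)).
  by have : (B0 `&` B1) y by []; rewrite dB.
- move=> [B0x cx]; have [y [B1y B0y]] := cx B0 (open_nbhs_nbhs (conj oB0 B0x)).
  by have : (B0 `&` B1) y by []; rewrite dB.
Qed.

Lemma ball_segment (R : realType) (V : normedModType R) (u0 u : V) (e t : R) :
  ball u0 e u -> 0 <= t <= 1 -> ball u0 e (u0 + t *: (u - u0)).
Proof.
rewrite -!ball_normE /ball_ /= => bu /andP[t0 t1].
rewrite opprD addrA subrr add0r normrN normrZ ger0_norm //.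
apply: le_lt_trans bu; rewrite -normrN opprB.
by rewrite -[X in _ <= X]mul1r ler_wpM2r.
Qed.

Section Tree.
Variables (R : realType) (A : finType).
Local Notation Tpt := (Tpt R A).

Definition T_cont_on (X : topologicalType) (V : set X) (F : X -> Tpt) :=
  forall S, T_open S -> open (V `&` F @^-1` S).

Lemma T_cont_on_comp (X Y : topologicalType) (W : set X) (f : X -> Y)
    (V : set Y) (F : Y -> Tpt) :
  open W -> {in W, continuous f} -> T_cont_on V F ->
  T_cont_on (W `&` f @^-1` V) (F \o f).
Proof.
move=> oW cf cF S oS; rewrite -setIA.
exact: (continuous_inP f oW).1 cf _ (cF S oS).
Qed.

Definition cont_plots : pfam R Tpt := fun n U P => open U /\ T_cont_on U P.

Lemma cont_plots_diffeology : is_diffeology cont_plots.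
Proof.
split.
- by move=> n U P [].
- move=> n U x oU; split=> // S _.
  have [Sx|nSx] := pselect (S x).
    by rewrite (_ : _ @^-1` _ = setT) ?setIT // -subTset => u.
  by rewrite (_ : _ @^-1` _ = set0) ?setI0 ?open0 // -subset0 => u.
- move=> n m U V P f Q [oU cP] oV sf fVU QE; split=> // S oS.
  have cf : {in V, continuous f} by move=> y /set_mem Vy; exact: sf 0%N y Vy.
  have -> : V `&` Q @^-1` S = V `&` f @^-1` U `&` (P \o f) @^-1` S.
    apply/seteqP; split=> y /=.
      by move=> [Vy]; rewrite QE // => Sy; do !split=> //; apply: fVU.
    by move=> [[Vy _] Sy]; rewrite QE.
  exact: T_cont_on_comp.
- move=> n U P oU loc; split=> // S oS; rewrite openE => u [Uu Su].
  have [V [oV Vu VU [_ cV]]] := loc u Uu.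
  have : nbhs u (V `&` P @^-1` S) by apply: open_nbhs_nbhs; split=> //; apply: cV.
  by apply: filterS => y [Vy Sy]; split=> //; apply: VU.
Qed.

Lemma D_T_cont_plots n (U : set 'rV[R]_n) P : D_T U P -> cont_plots U P.
Proof.
move=> HP; apply: HP; first exact: cont_plots_diffeology.
move=> g [_ [gc _]]; split=> [|S oS]; first exact: openT.
rewrite setTI (_ : _ @^-1` _ = (fun v : 'rV_1 => v ord0 ord0) @^-1` (g @^-1` S)) //.
by apply: open_comp (gc _ oS) => v _; apply: coord_continuous.
Qed.

Lemma vtx_rcons (w : seq A) a :
  vtx R (rcons w a) = Some (w, a, exist _ 1 (@unit_in R)).
Proof. by case: w => [|x s] //=; rewrite belast_rcons last_rcons. Qed.

Lemma epoint_vtx (w : seq A) a (t : R) :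
  ~~ (0 < t <= 1) -> epoint w a t = vtx R w.
Proof. by rewrite /epoint; case: {-}_ / idP => // h' /negP. Qed.

Lemma epoint_edge (w : seq A) a (t : R) (h : 0 < t <= 1) :
  epoint w a t = Some (w, a, exist _ t h).
Proof.
rewrite /epoint; case: {-}_ / idP => // h'.
by congr (Some (_, _, _)); apply: eq_exist.
Qed.

Definition tent (v0 : seq A) (x : Tpt) : R :=
  match x with
  | None => (v0 == [::])%:R
  | Some (w, a, t) =>
      if rcons w a == v0 then sval t else if w == v0 then 1 - sval t else 0
  end.

Definition tent_edge (v0 w : seq A) (a : A) (t : R) : R :=
  if rcons w a == v0 then t else if w == v0 then 1 - t else 0.

Lemma tent_vtx v0 v : tent v0 (vtx R v) = (v == v0)%:R.
Proof.
case: (lastP v) => [|w a]; first by rewrite /= eq_sym.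
by rewrite vtx_rcons /=; case: ifP => // _; case: ifP; rewrite ?subrr.
Qed.

Lemma tent_epoint v0 w a t :
  0 <= t <= 1 -> tent v0 (epoint w a t) = tent_edge v0 w a t.
Proof.
move=> /andP[t0 t1].
have [h|h] := boolP (0 < t <= 1); first by rewrite (epoint_edge _ _ h).
have -> : t = 0 by apply/eqP; rewrite eq_le t0 andbT leNgt -(andbT (0 < t)) -t1.
rewrite epoint_vtx ?ltxx // tent_vtx /tent_edge.
have [<-|_] := eqVneq (rcons w a) v0; last by case: (w == v0); rewrite ?subr0.
by case: eqP => // /(congr1 size); rewrite size_rcons => /n_Sn.
Qed.

Lemma continuous_tent_edge v0 w a : continuous (tent_edge v0 w a).
Proof.
rewrite /tent_edge; case: (rcons w a == v0); first by move=> t; exact: cvg_id.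
case: (w == v0); last exact: cst_continuous.
by move=> t; apply: continuousB; [exact: cst_continuous | exact: cvg_id].
Qed.

Lemma T_open_preimage_tent v0 (O : set R) : open O -> T_open (tent v0 @^-1` O).
Proof.
move=> oO w a; exists (tent_edge v0 w a @^-1` O); split.
  by apply: open_comp => // t _; apply: continuous_tent_edge.
by move=> t t01; rewrite /preimage /= tent_epoint.
Qed.

Lemma realize_vtx (g : seq A -> seq A) v :
  g [::] = [::] -> realize g (vtx R v) = vtx R (g v).
Proof.
case: (lastP v) => [-> //|w a _]; rewrite vtx_rcons /=.
by case: (lastP (g (rcons w a))) => [|s b] //; rewrite rev_rcons revK vtx_rcons.
Qed.

Lemma eq_realize (g1 g2 : seq A -> seq A) :
  (forall v, realize g1 (vtx R v) = realize g2 (vtx R v)) ->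
  realize (R:=R) g1 =1 realize g2.
Proof.
move=> H [[[w a] t]|] //; have := H (rcons w a); rewrite vtx_rcons /=.
by case: (rev (g1 _)) => [|b1 r1]; case: (rev (g2 _)) => [|b2 r2] // [-> ->].
Qed.

Lemma AutT_eq (p q : AutT R A) : sval (sval p) =1 sval (sval q) -> p = q.
Proof.
case: p q => [[f hf] hp] [[f' hf'] hq] /= /funext E; subst f'.
by rewrite (Prop_irrelevance hf hf'); congr exist; apply: Prop_irrelevance.
Qed.

Lemma AutT_vtx (p : AutT R A) v : exists v', sval (sval p) (vtx R v) = vtx R v'.
Proof.
by have [g [[_ g0 _] Eg]] := svalP p; exists (g v); rewrite Eg realize_vtx.
Qed.

Lemma AutT_eq_vtx (p q : AutT R A) :
  (forall v, sval (sval p) (vtx R v) = sval (sval q) (vtx R v)) -> p = q.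
Proof.
have [g [_ Eg]] := svalP p; have [h [_ Eh]] := svalP q.
move=> E; apply: AutT_eq => x; rewrite Eg Eh; apply: eq_realize => v.
by rewrite -Eg -Eh.
Qed.

Lemma connected_vtx_valued_const (X : topologicalType) (V C : set X)
    (F : X -> Tpt) :
  T_cont_on V F -> C `<=` V -> connected C ->
  (forall x, C x -> exists v, F x = vtx R v) ->
  forall x y, C x -> C y -> F x = F y.
Proof.
move=> cF CV cC Cvtx x y Cx Cy.
have [v0 Fx] := Cvtx x Cx; have [v Fy] := Cvtx y Cy.
set B0 := V `&` F @^-1` (tent v0 @^-1` [set r | 2^-1 < r]).
set B1 := V `&` F @^-1` (tent v0 @^-1` [set r | r < 2^-1]).
have oB0 : open B0 by apply/cF/T_open_preimage_tent/open_gt.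
have oB1 : open B1 by apply/cF/T_open_preimage_tent/open_lt.
have dB : B0 `&` B1 = set0.
  by rewrite -subset0 => z [[_ /= h0] [_ /= h1]]; have := lt_trans h0 h1; rewrite ltxx.
have tent_vtx_half w : 2^-1 < tent v0 (vtx R w) = (w == v0).
  by rewrite tent_vtx; case: (w == v0) => /=; [apply/idP | apply/negP]; lra.
have CB : C `<=` B0 `|` B1.
  move=> z Cz; have [w Fz] := Cvtx z Cz.
  have [wv0|wv0] := eqVneq w v0; [left | right]; split; try exact: CV.
    by rewrite /= Fz tent_vtx_half wv0.
  by rewrite /= Fz tent_vtx (negPf wv0) /=; lra.
have [CB0|CB1] := connected_subset (open_disjoint_separated oB0 oB1 dB) CB cC.
- by have [_] := CB0 y Cy; rewrite /preimage /= Fy tent_vtx_half Fx => /eqP ->.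
- have [_] := CB1 x Cx; rewrite /preimage /= Fx => /lt_trans h.
  by have := tent_vtx_half v0; rewrite eqxx => /h; rewrite ltxx.
Qed.

Lemma D_aut_eval n (U : set 'rV[R]_n) (P : 'rV[R]_n -> AutT R A) (x : Tpt) :
  D_aut U P -> open U /\ D_T U (fun u => sval (sval (P u)) x).
Proof.
case=> D [[oD cD _ _] DP evs]; have oU := oD _ _ _ DP; split=> //.
apply: (evs n U (fun u => (sval (P u), x))); split=> //.
by move=> D' [_ cD' _ _] _; apply: cD'.
Qed.

Lemma D_aut_segment_const n (U : set 'rV[R]_n) (P : 'rV[R]_n -> AutT R A)
    u0 u :
  D_aut U P -> (forall t : R, 0 <= t <= 1 -> U (u0 + t *: (u - u0))) ->
  P u = P u0.
Proof.
move=> HP segU; apply: AutT_eq_vtx => v.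
have [oU /D_T_cont_plots [_ cF]] := D_aut_eval (vtx R v) HP.
pose L t : 'rV[R]_n := u0 + t *: (u - u0).
have cL : {in setT, continuous L}.
  move=> t _; apply: (@continuousD _ _ _ (fun=> u0) (fun t : R => t *: (u - u0))).
    exact: cst_continuous.
  by apply: continuousZl; exact: cvg_id.
have sub01 : `[0, 1] `<=` setT `&` L @^-1` U.
  by move=> t; rewrite /= in_itv /= => t01; split=> //; apply: segU.
have [in0 in1] : `[0, 1]%classic (0 : R) /\ `[0, 1]%classic (1 : R).
  by split; rewrite /= in_itv /= lexx ler01.
have := connected_vtx_valued_const (T_cont_on_comp openT cL cF) sub01
  (@segment_connected R 0 1) (fun t _ => AutT_vtx _ _) in1 in0.
by rewrite /= /L scale1r scale0r addr0 addrC subrK.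
Qed.

End Tree.

Theorem mainTheorem6 (R : realType) (A : finType) (hp : (2 <= #|A|)%N) :
  forall S : set (AutT R A), D_open (D_aut (A:=A)) S.
Proof.
move=> S n U P HP; have [oU _] := D_aut_eval None HP.
rewrite openE => u0 [Uu0 Su0].
have /nbhs_ballP[e e0 ballU] : nbhs u0 U by apply: open_nbhs_nbhs.
apply/nbhs_ballP; exists e => // u bu; split; first exact: ballU.
by rewrite (D_aut_segment_const (u0 := u0) HP) // => t t01;
  apply/ballU/ball_segment.
Qed.
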